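(* For every pair $1\le i<j<k$, the vector $\vec \alpha^{\{i,j\}}$ is an element of $\Lambda$.
   Context: Let $g\ge 2$, $k\ge 3$ be integers, $\mathbb Z_g$ the integers mod $g$, and $d=\binom{k}{2}(g-1)$. Index the coordinates of $\mathbb R^d$ by pairs $(\{i,j\},a)$ with $1\le i<j\le k$ and $a\in\mathbb Z_g\setminus\{0\}$. Define $Z:(\mathbb Z_g)^k\to\mathbb R^d$ by $[Z(\vec x)]_{\{i,j\},a}=1-1/g$ if $x_i-x_j=a$ and $-1/g$ otherwise. Define $\Phi(\vec\theta)=\sum_{\vec x\in(\mathbb Z_g)^k} g^{-k}e^{i\vec\theta\cdot Z(\vec x)}$ for $\vec\theta\in\mathbb R^d$, and $\Lambda=\{\vec\theta\in\mathbb R^d: |\Phi(\vec\theta)|=1\}$. Let $\mathbbm{1}_{\{i,j\},a}$ be the standard basis vector of $\mathbb R^d$ with a $1$ in coordinate $(\{i,j\},a)$. For $1\le i<j<k$ (strict inequality $j<k$) define \[ \vec \alpha^{\{i,j\}} = \sum_{n=1}^{g-1} \frac{2\pi n}{g} \mathbbm{1}_{\{i,j\},n}+ \sum_{n=1}^{g-1} \frac{2 \pi(g-n)}{g} \mathbbm{1}_{\{i,k\},n} + \sum_{n=1}^{g-1} \frac{2 \pi n}{g} \mathbbm{1}_{\{j,k\},n},\] where $n$ is an integer in $[1,g-1]$ except in the subscripts, where it denotes the corresponding element of $\mathbb Z_g$. *)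

From HB Require Import structures.
From mathcomp Require Import all_boot all_order all_algebra.
From mathcomp Require Import all_classical all_reals.
From mathcomp Require Import trigo.
From mathcomp Require Import complex.

Set Implicit Arguments.
Unset Strict Implicit.
Unset Printing Implicit Defensive.

Import Order.TTheory GRing.Theory Num.Theory.
Local Open Scope ring_scope.

Definition pairIdx (k : nat) := {p : 'I_k * 'I_k | (p.1 < p.2)%N}.

Definition nzZg (g : nat) := {a : 'Z_g | a != 0}.

(* Coordinates of R^d, d = binom(k,2)(g-1): pairs ({i,j}, a). *)
Definition coord (g k : nat) := (pairIdx k * nzZg g)%type.

Section Defs.
Variable R : realType.

Definition Zvec (g k : nat) (x : {ffun 'I_k -> 'Z_g}) (c : coord g k) : R :=
  let i := (sval c.1).1 in
  let j := (sval c.1).2 in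
  if x i - x j == sval c.2 then 1 - (g%:R)^-1 else - (g%:R)^-1.

Definition expi (t : R) : R[i] := (cos t +i* sin t)%C.

Definition dotp (g k : nat) (theta u : coord g k -> R) : R :=
  \sum_(c : coord g k) theta c * u c.

Definition Phi (g k : nat) (theta : coord g k -> R) : R[i] :=
  \sum_(x : {ffun 'I_k -> 'Z_g}) ((g%:R ^- k : R)%:C)%C * expi (dotp theta (Zvec x)).

Definition Lambda (g k : nat) : set (coord g k -> R) :=
  [set theta | `|Phi theta| = 1].

(* alpha^{i,j} for 0-based i < j < k-1; the paper's index k is k.-1 here. *)
Definition alpha (g k : nat) (i j : nat) (c : coord g k) : R :=
  let p := val (sval c.1).1 in
  let q := val (sval c.1).2 in
  let n := val (sval c.2) in
  if (p == i) && (q == j) then 2 * pi * n%:R / g%:R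
  else if (p == i) && (q == k.-1) then 2 * pi * (g - n)%:R / g%:R
  else if (p == j) && (q == k.-1) then 2 * pi * n%:R / g%:R
  else 0.

End Defs.

(* Z(x) is the indicator of the events x_i - x_j = a, shifted by the constant
   -1/g.  Hence theta . Z(x) = theta . 1[x] - (sum theta)/g, and |Phi theta| = 1
   as soon as every theta . 1[x] lies in 2 pi Z: all g^k terms of Phi are then
   the same unit complex number.  For alpha = alpha^{i,j}, with u = x_i - x_j
   and w = x_j - x_k read as residues in [0, g), the only nonzero
   contributions sum to
   2 pi/g (u + w + (g - (u + w mod g))) (the middle term being absent when
   u + w = 0 mod g), which is a multiple of 2 pi. *)

From Pilot Require Import Defs.
From HB Require Import structures.
From mathcomp Require Import all_boot all_order all_algebra.
From mathcomp Require Import all_classical all_reals.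
From mathcomp Require Import trigo.
From mathcomp Require Import complex.
From mathcomp Require Import ring.

Set Implicit Arguments.
Unset Strict Implicit.
Unset Printing Implicit Defensive.

Import Order.TTheory GRing.Theory Num.Theory.
Local Open Scope ring_scope.
Local Open Scope classical_set_scope.

Lemma dvdn_add_compl_mod (n d : nat) :
  (0 < d)%N -> (d %| n + (if n %% d == 0 then 0 else d - n %% d))%N.
Proof.
move=> d_gt0; case: eqP => [mod0|_]; first by rewrite addn0 /dvdn mod0.
have le_mod : (n %% d <= d)%N by rewrite ltnW ?ltn_mod.
by rewrite {1}(divn_eq n d) -addnA subnKC // -mulSnr dvdn_mull.
Qed.

Section UnitModulus.
Variables (R : realType) (g k : nat).
Hypothesis g_gt1 : (1 < g)%N.

Definition diff_indicator (x : {ffun 'I_k -> 'Z_g}) (c : Defs.coord g k) : R :=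
  if x (sval c.1).1 - x (sval c.1).2 == sval c.2 then 1 else 0.

Lemma Zvec_diff_indicator x c : Zvec R x c = diff_indicator x c - (g%:R)^-1.
Proof. by rewrite /Zvec /diff_indicator; case: ifP; rewrite ?sub0r. Qed.

Lemma dotp_Zvec (theta : Defs.coord g k -> R) x :
  dotp theta (Zvec R x) = dotp theta (diff_indicator x) - (\sum_c theta c) / g%:R.
Proof.
rewrite /dotp mulr_suml -sumrB; apply: eq_bigr => c _.
by rewrite Zvec_diff_indicator mulrBr.
Qed.

Lemma expi_periodicn (t : R) m : expi (t + (pi *+ 2) *+ m) = expi t.
Proof. by rewrite /expi (periodicn (@cosD2pi R)) (periodicn (@sinD2pi R)). Qed.

Lemma norm_expi (t : R) : `|expi t| = 1.
Proof. by rewrite normc_def /= cos2Dsin2 sqrtr1. Qed.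

Lemma Phi_const (theta : Defs.coord g k -> R) (e : R[i]) :
  (forall x, expi (dotp theta (Zvec R x)) = e) -> Phi theta = e.
Proof.
move=> theta_e; rewrite /Phi (eq_bigr (fun=> ((g%:R ^- k : R)%:C)%C * e)) => [|x _]; last first.
  by rewrite theta_e.
rewrite sumr_const card_ffun !card_ord (Zp_cast g_gt1) -mulrnAl -rmorphMn.
have g_neq0 : g%:R != 0 :> R by rewrite pnatr_eq0 -lt0n ltnW.
by rewrite -mulr_natr natrX mulVf ?expf_neq0 // rmorph1 mul1r.
Qed.

Lemma mem_Lambda_2pi_multiples (theta : Defs.coord g k -> R) :
  (forall x, exists m, dotp theta (diff_indicator x) = (pi *+ 2) *+ m) ->
  theta \in @Lambda R g k.
Proof.
move=> theta_2pi; apply: mem_set.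
rewrite /Lambda /= (@Phi_const _ (expi (- ((\sum_c theta c) / g%:R)))) ?norm_expi // => x.
by rewrite dotp_Zvec; have [m ->] := theta_2pi x; rewrite addrC expi_periodicn.
Qed.

Lemma sum_pair_diff_indicator (P : pairIdx k) (F : 'Z_g -> R) x :
  \sum_c (if c.1 == P then F (sval c.2) else 0) * diff_indicator x c =
  if x (sval P).1 - x (sval P).2 == 0 then 0 else F (x (sval P).1 - x (sval P).2).
Proof.
pose E p a := (if p == P then F (sval a) else 0) * diff_indicator x (p, a).
rewrite -(pair_big xpredT xpredT E) (bigD1 P) //= [X in _ + X]big1 ?addr0; last first.
  by move=> p /negbTE ne_pP; apply: big1 => a _; rewrite /E ne_pP mul0r.
rewrite /E /diff_indicator /= eqxx; set d := _ - _.
case: eqP => [->|/eqP d_neq0].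
  by apply: big1 => -[a a_neq0] _; rewrite /= eq_sym (negbTE a_neq0) mulr0.
rewrite (bigD1 (exist _ d d_neq0)) //= !eqxx mulr1 big1 ?addr0 // => -[a a_neq0] /= a_neq.
case: eqP => [d_a|]; last by rewrite mulr0.
by case/eqP: a_neq; apply: val_inj; rewrite /= d_a.
Qed.

Lemma val_Zp_add (u w : 'Z_g) : val (u + w) = ((val u + val w) %% g)%N.
Proof. by rewrite /=; congr (_ %% _)%N; apply: Zp_cast. Qed.

End UnitModulus.

Section Alpha.
Variables (R : realType) (g k i j : nat).
Hypotheses (g_gt1 : (1 < g)%N) (lt_ij : (i < j)%N) (lt_j_last : (j < k.-1)%N).

Let lt_last : (k.-1 < k)%N. Proof. by case: k lt_j_last. Qed.
Let lt_j : (j < k)%N. Proof. exact: ltn_trans lt_last. Qed.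
Let lt_i : (i < k)%N. Proof. exact: ltn_trans lt_j. Qed.
Let lt_i_last : (i < k.-1)%N. Proof. exact: ltn_trans lt_j_last. Qed.

Let P_ij : pairIdx k := exist _ (Ordinal lt_i, Ordinal lt_j) lt_ij.
Let P_ik : pairIdx k := exist _ (Ordinal lt_i, Ordinal lt_last) lt_i_last.
Let P_jk : pairIdx k := exist _ (Ordinal lt_j, Ordinal lt_last) lt_j_last.

Definition angle (n : nat) : R := 2 * pi * n%:R / g%:R.

Lemma alpha_decomp (c : Defs.coord g k) :
  alpha R i j c =
    (if c.1 == P_ij then angle (val (sval c.2)) else 0) +
    (if c.1 == P_ik then angle (g - val (sval c.2)) else 0) +
    (if c.1 == P_jk then angle (val (sval c.2)) else 0).
Proof.
case: c => -[[p q] lt_pq] a; rewrite /alpha /angle /=.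
rewrite -!(inj_eq val_inj) /= !xpair_eqE -!(inj_eq val_inj) /=.
have [-> | ne_pi] /= := eqVneq (val p) i; last by rewrite !add0r.
rewrite (ltn_eqF lt_ij) /= addr0.
have [-> | _] := eqVneq (val q) j; last by rewrite add0r.
by rewrite (ltn_eqF lt_j_last) addr0.
Qed.

Lemma dotp_alpha_diff_indicator (x : {ffun 'I_k -> 'Z_g}) :
  exists m, dotp (alpha R i j) (diff_indicator R x) = (pi *+ 2) *+ m.
Proof.
have angle_nz (d : 'Z_g) : (if d == 0 then 0 else angle (val d)) = angle (val d).
  by case: eqP => // ->; rewrite /angle mulr0 mul0r.
set u := x (sval P_ij).1 - x (sval P_ij).2.
set w := x (sval P_jk).1 - x (sval P_jk).2.
have u_add_w : x (sval P_ik).1 - x (sval P_ik).2 = u + w by rewrite /u /w /= addrA subrK.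
rewrite /dotp; under eq_bigr do rewrite alpha_decomp !mulrDl.
rewrite !big_split /= (sum_pair_diff_indicator P_ij (fun d => angle (val d))).
rewrite (sum_pair_diff_indicator P_ik (fun d => angle (g - val d))).
rewrite (sum_pair_diff_indicator P_jk (fun d => angle (val d))) -/u -/w u_add_w !angle_nz.
rewrite -[u + w == 0]/(val (u + w)%R == 0)%N (val_Zp_add g_gt1).
set n := (val u + val w)%N; set N := (n + (if n %% g == 0 then 0 else g - n %% g))%N.
exists (N %/ g)%N.
have g_neq0 : g%:R != 0 :> R by rewrite pnatr_eq0 -lt0n ltnW.
have N_eq : N = (N %/ g * g)%N by rewrite divnK // dvdn_add_compl_mod // ltnW.
transitivity (angle N); last by rewrite /angle {1}N_eq -mulrnA -mulr_natr !natrM; field.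
by rewrite /N /angle; case: eqP => _; rewrite !natrD /=; field.
Qed.

End Alpha.

Theorem proposition2p8 (R : realType) (g k : nat) (hg : (2 <= g)%N) (hk : (3 <= k)%N)
  (i j : nat) (hij : (i < j)%N) (hjk : (j < k.-1)%N) :
  (@alpha R g k i j) \in (@Lambda R g k).
Proof.
(* [hk] is redundant: [i < j < k.-1] already forces [3 <= k]. *)
apply: (mem_Lambda_2pi_multiples hg) => x.
exact: dotp_alpha_diff_indicator hg hij hjk x.
Qed.
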